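(* Let $0<\alpha\le\beta<\infty$ and $\varphi\in\mathcal{K}(\alpha,\beta)$. Then for all $a,b\in\mathbb{C}\setminus\{0\}$: (i) if $\beta\le1$, then $|\varphi(|a|)\mathrm{sign}(a)-\varphi(|b|)\mathrm{sign}(b)|\le\varphi(|a-b|)+4\frac{|a-b|}{|a|+|b|}\varphi(|a|+|b|)$; (ii) if $\beta\ge1$, then $|\varphi(|a|)\mathrm{sign}(a)-\varphi(|b|)\mathrm{sign}(b)|\le(2\beta+4)\frac{|a-b|}{|a|+|b|}\varphi(|a|+|b|)$.
   Context: For $0<\alpha\le\beta<\infty$, a non-decreasing continuous function $\varphi:[0,\infty)\to[0,\infty)$ with $\varphi(0)=0$ is in the class $\mathcal{K}(\alpha,\beta)$ if $\varphi(t)/t^\alpha$ is non-decreasing and $\varphi(t)/t^\beta$ is non-increasing on $t>0$. For $a\in\mathbb{C}\setminus\{0\}$, $\mathrm{sign}(a)=a/|a|$. *)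

From Stdlib Require Import Reals.
Open Scope R_scope.

(* The complex plane as pairs (Re, Im). *)
Definition Cplx := (R * R)%type.
Definition Cnorm (z : Cplx) : R := sqrt (fst z * fst z + snd z * snd z).
Definition Csub (z w : Cplx) : Cplx := (fst z - fst w, snd z - snd w).
Definition Cscale (r : R) (z : Cplx) : Cplx := (r * fst z, r * snd z).
Definition C0 : Cplx := (0, 0).

Definition Csign (a : Cplx) : Cplx := Cscale (/ Cnorm a) a.

(* phi : [0,oo) -> [0,oo), modelled as a function R -> R whose behaviour
   on negative reals is irrelevant. *)
Definition class_K (alpha beta : R) (phi : R -> R) : Prop :=
  (forall t, 0 <= t -> limit1_in phi (fun x => 0 <= x) (phi t) t) /\
  (forall t, 0 <= t -> 0 <= phi t) /\
  phi 0 = 0 /\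
  (forall s t, 0 <= s -> s <= t -> phi s <= phi t) /\
  (forall s t, 0 < s -> s <= t -> phi s / Rpower s alpha <= phi t / Rpower t alpha) /\
  (forall s t, 0 < s -> s <= t -> phi t / Rpower t beta <= phi s / Rpower s beta).

(* Write r = |a|, s = |b|, p = phi r, q = phi s, u = sign a, v = sign b; by symmetry s <= r.
   Then p u - q v = (p - q) u + q (u - v), and the chord estimate
   (r + s) |u - v| <= 2 |a - b| together with q <= phi (r + s) bounds the
   second term.  For the first term, comparing phi with t^beta gives
   phi r (s/r)^beta <= phi s for s <= r.  If beta <= 1 then (s/r)^beta >= s/r, so
   phi is subadditive and p - q <= phi (r - s) <= phi |a - b|.  If beta >= 1
   then Bernoulli's inequality (s/r)^beta >= 1 - beta (1 - s/r) gives
   p - q <= beta (r - s)/r phi r <= 2 beta |a - b|/(r + s) phi (r + s). *)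

From Stdlib Require Import Reals Lra Psatz.
Open Scope R_scope.

Lemma ln_le_sub_1 x : 0 < x -> ln x <= x - 1.
Proof.
  intros Hx. pose proof (exp_ineq1_le (ln x)) as H. rewrite exp_ln in H; lra.
Qed.

Lemma sub_1_le_mul_ln x : 0 < x -> x - 1 <= x * ln x.
Proof.
  intros Hx.
  assert (Hinv : ln (/ x) <= / x - 1) by (apply ln_le_sub_1, Rinv_0_lt_compat, Hx).
  rewrite ln_Rinv in Hinv by exact Hx.
  apply Rmult_le_compat_l with (r := x) in Hinv; [|lra].
  replace (x * (/ x - 1)) with (1 - x) in Hinv by (field; lra).
  lra.
Qed.

Lemma Rdiv_nonneg_pos x y : 0 <= x -> 0 < y -> 0 <= x / y.
Proof. intros Hx Hy. apply Rmult_le_pos; [exact Hx | left; apply Rinv_0_lt_compat, Hy]. Qed.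

Lemma Rpower_pos x b : 0 < Rpower x b.
Proof. apply exp_pos. Qed.

(* The tangent line of exp at 0, applied to x^b = x exp ((b - 1) ln x). *)
Lemma Rpower_ge_tangent x b : 0 < x -> x * (1 + (b - 1) * ln x) <= Rpower x b.
Proof.
  intros Hx. unfold Rpower.
  replace (b * ln x) with (ln x + (b - 1) * ln x) by ring.
  rewrite exp_plus, exp_ln by exact Hx.
  apply Rmult_le_compat_l; [lra | apply exp_ineq1_le].
Qed.

Lemma Rpower_ge_self x b : 0 < x <= 1 -> b <= 1 -> x <= Rpower x b.
Proof.
  intros Hx Hb.
  pose proof (Rpower_ge_tangent x b (proj1 Hx)).
  pose proof (ln_le_sub_1 x (proj1 Hx)).
  assert (0 <= (b - 1) * ln x) by nra.
  nra.
Qed.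

Lemma Rpower_bernoulli x b : 0 < x -> 1 <= b -> 1 + b * (x - 1) <= Rpower x b.
Proof.
  intros Hx Hb.
  pose proof (Rpower_ge_tangent x b Hx).
  pose proof (sub_1_le_mul_ln x Hx).
  nra.
Qed.

Lemma Cnorm_nonneg z : 0 <= Cnorm z.
Proof. apply sqrt_pos. Qed.

Lemma Cnorm_sqr z : Cnorm z * Cnorm z = fst z * fst z + snd z * snd z.
Proof. apply sqrt_sqrt. nra. Qed.

Lemma Cnorm_pos a : a <> C0 -> 0 < Cnorm a.
Proof.
  destruct a as [a1 a2]. intros Ha. apply sqrt_lt_R0. simpl.
  destruct (Rlt_le_dec 0 (a1 * a1 + a2 * a2)) as [|Hle]; [assumption|].
  exfalso. apply Ha.
  assert (a1 = 0) by nra. assert (a2 = 0) by nra. subst. reflexivity.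
Qed.

Lemma Cnorm_scale k z : Cnorm (Cscale k z) = Rabs k * Cnorm z.
Proof.
  destruct z as [z1 z2]. unfold Cnorm, Cscale; simpl.
  replace (k * z1 * (k * z1) + k * z2 * (k * z2)) with (k² * (z1 * z1 + z2 * z2))
    by (unfold Rsqr; ring).
  rewrite sqrt_mult_alt, sqrt_Rsqr_abs by apply Rle_0_sqr.
  reflexivity.
Qed.

Lemma Cnorm_sub_sym z w : Cnorm (Csub z w) = Cnorm (Csub w z).
Proof. destruct z, w. unfold Cnorm, Csub; simpl. f_equal. ring. Qed.

Lemma Cnorm_sub_le z w : Cnorm (Csub z w) <= Cnorm z + Cnorm w.
Proof.
  destruct z as [z1 z2], w as [w1 w2].
  pose proof (sqrt_cauchy z1 z2 (- w1) (- w2)) as Hcs.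
  replace ((- w1)² + (- w2)²) with (w1 * w1 + w2 * w2) in Hcs by (unfold Rsqr; ring).
  apply Rsqr_incr_0_var; [|pose proof (Cnorm_nonneg (z1, z2)); pose proof (Cnorm_nonneg (w1, w2)); lra].
  unfold Rsqr. rewrite Cnorm_sqr.
  replace ((Cnorm (z1, z2) + Cnorm (w1, w2)) * (Cnorm (z1, z2) + Cnorm (w1, w2)))
    with (Cnorm (z1, z2) * Cnorm (z1, z2) + Cnorm (w1, w2) * Cnorm (w1, w2)
          + 2 * (Cnorm (z1, z2) * Cnorm (w1, w2))) by ring.
  rewrite !Cnorm_sqr. unfold Cnorm, Rsqr in *; simpl in *. lra.
Qed.

Lemma Cnorm_sub_ge a b : Cnorm a - Cnorm b <= Cnorm (Csub a b).
Proof.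
  assert (Ha : a = Csub (Csub a b) (Cscale (-1) b)).
  { destruct a, b. unfold Csub, Cscale; simpl. f_equal; ring. }
  pose proof (Cnorm_sub_le (Csub a b) (Cscale (-1) b)) as H.
  rewrite <- Ha, Cnorm_scale, Rabs_left in H by lra. lra.
Qed.

Lemma Cnorm_sign a : a <> C0 -> Cnorm (Csign a) = 1.
Proof.
  intros Ha. pose proof (Cnorm_pos a Ha).
  unfold Csign. rewrite Cnorm_scale, Rabs_inv, Rabs_pos_eq by lra.
  field. lra.
Qed.

Lemma Cscale_norm_sign a : a <> C0 -> Cscale (Cnorm a) (Csign a) = a.
Proof.
  intros Ha. pose proof (Cnorm_pos a Ha).
  destruct a. unfold Csign, Cscale; simpl. f_equal; field; lra.
Qed.

(* 4 |r u - s v|^2 - (r + s)^2 |u - v|^2 = (r - s)^2 |u + v|^2 for unit u, v. *)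
Lemma Cnorm_sub_units u v r s : Cnorm u = 1 -> Cnorm v = 1 -> 0 <= r -> 0 <= s ->
  (r + s) * Cnorm (Csub u v) <= 2 * Cnorm (Csub (Cscale r u) (Cscale s v)).
Proof.
  intros Hu Hv Hr Hs.
  assert (Hu2 := Cnorm_sqr u). assert (Hv2 := Cnorm_sqr v).
  rewrite Hu in Hu2. rewrite Hv in Hv2.
  apply Rsqr_incr_0_var; [|pose proof (Cnorm_nonneg (Csub (Cscale r u) (Cscale s v))); lra].
  unfold Rsqr.
  replace ((r + s) * Cnorm (Csub u v) * ((r + s) * Cnorm (Csub u v)))
    with ((r + s) * (r + s) * (Cnorm (Csub u v) * Cnorm (Csub u v))) by ring.
  replace (2 * Cnorm (Csub (Cscale r u) (Cscale s v)) * (2 * Cnorm (Csub (Cscale r u) (Cscale s v))))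
    with (4 * (Cnorm (Csub (Cscale r u) (Cscale s v)) * Cnorm (Csub (Cscale r u) (Cscale s v))))
    by ring.
  rewrite !Cnorm_sqr.
  destruct u as [u1 u2], v as [v1 v2]. unfold Csub, Cscale in *; simpl in *.
  pose proof (Rle_0_sqr ((r - s) * (u1 + v1))). pose proof (Rle_0_sqr ((r - s) * (u2 + v2))).
  unfold Rsqr in *. nra.
Qed.

Lemma Cnorm_radial_sub p q u v : Cnorm u = 1 ->
  Cnorm (Csub (Cscale p u) (Cscale q v)) <= Rabs (p - q) + Rabs q * Cnorm (Csub u v).
Proof.
  intros Hu.
  replace (Csub (Cscale p u) (Cscale q v)) with (Csub (Cscale (p - q) u) (Cscale q (Csub v u)))
    by (destruct u, v; unfold Csub, Cscale; simpl; f_equal; ring).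
  pose proof (Cnorm_sub_le (Cscale (p - q) u) (Cscale q (Csub v u))) as H.
  rewrite !Cnorm_scale, Hu, Rmult_1_r, (Cnorm_sub_sym v u) in H. exact H.
Qed.

Definition radial (phi : R -> R) (a : Cplx) : Cplx := Cscale (phi (Cnorm a)) (Csign a).

Definition radial_estimates (beta : R) (phi : R -> R) (a b : Cplx) : Prop :=
  (beta <= 1 ->
     Cnorm (Csub (radial phi a) (radial phi b))
     <= phi (Cnorm (Csub a b))
        + 4 * (Cnorm (Csub a b) / (Cnorm a + Cnorm b)) * phi (Cnorm a + Cnorm b)) /\
  (1 <= beta ->
     Cnorm (Csub (radial phi a) (radial phi b))
     <= (2 * beta + 4) * (Cnorm (Csub a b) / (Cnorm a + Cnorm b)) * phi (Cnorm a + Cnorm b)).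

Lemma radial_estimates_sym beta phi a b :
  radial_estimates beta phi b a -> radial_estimates beta phi a b.
Proof.
  unfold radial_estimates.
  rewrite (Cnorm_sub_sym (radial phi b)), (Cnorm_sub_sym b a), (Rplus_comm (Cnorm b)).
  exact (fun H => H).
Qed.

Section ClassK.

Variables (alpha beta : R) (phi : R -> R).
Hypothesis HK : class_K alpha beta phi.

Lemma phi_nonneg t : 0 <= t -> 0 <= phi t.
Proof. apply HK. Qed.

Lemma phi_mono s t : 0 <= s -> s <= t -> phi s <= phi t.
Proof. apply HK. Qed.

Lemma phi_ratio_lower s r : 0 < s -> s <= r -> phi r * Rpower (s / r) beta <= phi s.
Proof.
  intros Hs Hsr.
  destruct HK as (_ & _ & _ & _ & _ & Hbeta).
  pose proof (Hbeta s r Hs Hsr) as H.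
  pose proof (Rpower_pos s beta). pose proof (Rpower_pos r beta).
  assert (Hsplit : Rpower (s / r) beta * Rpower r beta = Rpower s beta).
  { rewrite Rpower_mult_distr by (try apply Rdiv_lt_0_compat; lra).
    f_equal. field. lra. }
  apply Rmult_le_compat_r with (r := Rpower s beta) in H; [|lra].
  rewrite <- Hsplit in H at 1.
  replace (phi s / Rpower s beta * Rpower s beta) with (phi s) in H by (field; lra).
  replace (phi r / Rpower r beta * (Rpower (s / r) beta * Rpower r beta))
    with (phi r * Rpower (s / r) beta) in H by (field; lra).
  exact H.
Qed.

Lemma phi_linear_lower x r : beta <= 1 -> 0 < x -> x <= r -> phi r * (x / r) <= phi x.
Proof.
  intros Hbeta Hx Hxr.
  assert (Hq : 0 < x / r <= 1).
  { split; [apply Rdiv_lt_0_compat; lra|].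
    apply Rmult_le_reg_r with r; [lra|]. field_simplify; lra. }
  pose proof (Rpower_ge_self (x / r) beta Hq Hbeta).
  pose proof (phi_ratio_lower x r Hx Hxr).
  pose proof (phi_nonneg r ltac:(lra)).
  nra.
Qed.

Lemma phi_le_add s r : beta <= 1 -> 0 < s -> s <= r -> phi r <= phi s + phi (r - s).
Proof.
  intros Hbeta Hs Hsr.
  destruct (Req_dec r s) as [->|Hne].
  { replace (s - s) with 0 by ring. destruct HK as (_ & _ & -> & _). lra. }
  pose proof (phi_linear_lower s r Hbeta Hs Hsr).
  pose proof (phi_linear_lower (r - s) r Hbeta ltac:(lra) ltac:(lra)).
  replace (phi r) with (phi r * (s / r) + phi r * ((r - s) / r)) at 1 by (field; lra).
  lra.
Qed.

Lemma phi_sub_le s r : 1 <= beta -> 0 < s -> s <= r ->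
  phi r - phi s <= beta * ((r - s) / r) * phi r.
Proof.
  intros Hbeta Hs Hsr.
  pose proof (Rpower_bernoulli (s / r) beta ltac:(apply Rdiv_lt_0_compat; lra) Hbeta).
  pose proof (phi_ratio_lower s r Hs Hsr).
  pose proof (phi_nonneg r ltac:(lra)).
  replace ((r - s) / r) with (- (s / r - 1)) by (field; lra).
  nra.
Qed.

Lemma radial_sub_le a b : a <> C0 -> b <> C0 -> Cnorm b <= Cnorm a ->
  Cnorm (Csub (radial phi a) (radial phi b))
  <= phi (Cnorm a) - phi (Cnorm b)
     + 2 * (Cnorm (Csub a b) / (Cnorm a + Cnorm b)) * phi (Cnorm a + Cnorm b).
Proof.
  intros Ha Hb Hba.
  pose proof (Cnorm_pos a Ha) as Hr. pose proof (Cnorm_pos b Hb) as Hs.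
  assert (Hq : 0 <= phi (Cnorm b)) by (apply phi_nonneg; lra).
  assert (Hpq : phi (Cnorm b) <= phi (Cnorm a)) by (apply phi_mono; lra).
  assert (Hqrs : phi (Cnorm b) <= phi (Cnorm a + Cnorm b)) by (apply phi_mono; lra).
  assert (Hchord : Cnorm (Csub (Csign a) (Csign b))
                   <= 2 * (Cnorm (Csub a b) / (Cnorm a + Cnorm b))).
  { pose proof (Cnorm_sub_units (Csign a) (Csign b) (Cnorm a) (Cnorm b)
      (Cnorm_sign a Ha) (Cnorm_sign b Hb) ltac:(lra) ltac:(lra)) as Hunits.
    rewrite !Cscale_norm_sign in Hunits by assumption.
    apply Rmult_le_reg_l with (Cnorm a + Cnorm b); [lra|].
    replace ((Cnorm a + Cnorm b) * (2 * (Cnorm (Csub a b) / (Cnorm a + Cnorm b))))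
      with (2 * Cnorm (Csub a b)) by (field; lra).
    exact Hunits. }
  pose proof (Cnorm_radial_sub (phi (Cnorm a)) (phi (Cnorm b)) (Csign a) (Csign b)
    (Cnorm_sign a Ha)) as H.
  rewrite Rabs_pos_eq in H by lra. rewrite Rabs_pos_eq in H by exact Hq.
  pose proof (Cnorm_nonneg (Csub (Csign a) (Csign b))).
  unfold radial. nra.
Qed.

Lemma radial_estimates_ordered a b : a <> C0 -> b <> C0 -> Cnorm b <= Cnorm a ->
  radial_estimates beta phi a b.
Proof.
  intros Ha Hb Hba. unfold radial_estimates.
  pose proof (Cnorm_pos a Ha) as Hr. pose proof (Cnorm_pos b Hb) as Hs.
  pose proof (radial_sub_le a b Ha Hb Hba) as Hsub.
  pose proof (Cnorm_sub_ge a b) as Hgap.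
  set (r := Cnorm a) in *. set (s := Cnorm b) in *. set (d := Cnorm (Csub a b)) in *.
  assert (Ht : 0 <= d / (r + s)) by (apply Rdiv_nonneg_pos; [apply Cnorm_nonneg | lra]).
  assert (Hprs : 0 <= phi (r + s)) by (apply phi_nonneg; lra).
  assert (0 <= d / (r + s) * phi (r + s)) by (apply Rmult_le_pos; assumption).
  split; intros Hbeta.
  - pose proof (phi_le_add s r Hbeta Hs Hba).
    assert (phi (r - s) <= phi d) by (apply phi_mono; lra).
    lra.
  - pose proof (phi_sub_le s r Hbeta Hs Hba).
    assert (Hphi_r : phi r <= phi (r + s)) by (apply phi_mono; lra).
    assert (Hrel : (r - s) / r <= 2 * (d / (r + s))).
    { apply Rmult_le_reg_r with (r * (r + s)); [nra|].
      replace ((r - s) / r * (r * (r + s))) with ((r - s) * (r + s)) by (field; lra).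
      replace (2 * (d / (r + s)) * (r * (r + s))) with (2 * r * d) by (field; lra).
      nra. }
    assert (0 <= (r - s) / r) by (apply Rdiv_nonneg_pos; lra).
    assert ((r - s) / r * phi r <= 2 * (d / (r + s)) * phi (r + s)).
    { apply Rmult_le_compat; try lra. apply phi_nonneg; lra. }
    nra.
Qed.

End ClassK.

Theorem mainTheorem9 (alpha beta : R) (phi : R -> R)
  (Halpha : 0 < alpha) (Hab : alpha <= beta) (Hphi : class_K alpha beta phi)
  (a b : Cplx) (Ha : a <> C0) (Hb : b <> C0) :
  (beta <= 1 ->
     Cnorm (Csub (Cscale (phi (Cnorm a)) (Csign a)) (Cscale (phi (Cnorm b)) (Csign b)))
     <= phi (Cnorm (Csub a b))
        + 4 * (Cnorm (Csub a b) / (Cnorm a + Cnorm b)) * phi (Cnorm a + Cnorm b)) /\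
  (1 <= beta ->
     Cnorm (Csub (Cscale (phi (Cnorm a)) (Csign a)) (Cscale (phi (Cnorm b)) (Csign b)))
     <= (2 * beta + 4) * (Cnorm (Csub a b) / (Cnorm a + Cnorm b)) * phi (Cnorm a + Cnorm b)).
Proof.
  change (radial_estimates beta phi a b).
  destruct (Rle_dec (Cnorm b) (Cnorm a)) as [Hba|Hnle].
  - exact (radial_estimates_ordered alpha beta phi Hphi a b Ha Hb Hba).
  - apply radial_estimates_sym.
    apply (radial_estimates_ordered alpha beta phi Hphi b a Hb Ha). lra.
Qed.
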